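(* Let $k\ge2$, $IS\in\{\Box,\blacksquare\}^k$, and let $\tau$ be a correct compositional translation from $\mathrm{SYNCSIMPLE}$ into $\mathrm{LOCKSIMPLE}_{k,IS}$. Then for every $1\le i\le k$: $\#(P_i,\tau(!))+\#(P_i,\tau(?))\le\#(T_i,\tau(!))+\#(T_i,\tau(?))$, where $\#(S,r)$ is the number of occurrences of the symbol $S$ in the word $r$.
   Context: $\mathrm{SYNCSIMPLE}$: subprocesses are $\mathcal{U} ::= \checkmark \mid 0 \mid\, !\mathcal{U} \mid\, ?\mathcal{U}$; a process is a finite parallel composition $\mathcal{U}_1\mid\cdots\mid\mathcal{U}_n$ ($\mid$ associative, commutative, $0$ a unit). Reduction: $!\mathcal{U}_1\mid ?\mathcal{U}_2\mid \mathcal{P}\to \mathcal{U}_1\mid\mathcal{U}_2\mid\mathcal{P}$. Successful: of the form $\checkmark\mid\mathcal{P}$. May-convergent: reduces in zero or more steps to a successful process; must-convergent: every reachable process is may-convergent. $\mathrm{LOCKSIMPLE}_{k,IS}$ ($k$ locks, initial store $IS\in\{\Box,\blacksquare\}^k$, $\Box$ empty, $\blacksquare$ full): subprocesses are words over $\{P_1,T_1,\dots,P_k,T_k\}$ followed by $0$ or $\checkmark$, processes are parallel compositions. States $(\mathcal{P},C)$: $(P_i\mathcal{U}\mid\mathcal{P},C)\to(\mathcal{U}\mid\mathcal{P},C[C_i:=\blacksquare])$ only if $C_i=\Box$; $(T_i\mathcal{U}\mid\mathcal{P},C)\to(\mathcal{U}\mid\mathcal{P},C[C_i:=\Box])$ always.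 A state is successful if its process contains $\checkmark$; may-/must-convergence of states analogous; a process $\mathcal{P}$ is may/must-convergent iff $(\mathcal{P},IS)$ is. A compositional translation $\tau$ is given by words $\tau(!),\tau(?)$ over $\{P_i,T_i\}$ with $\tau(0)=0$, $\tau(\checkmark)=\checkmark$, $\tau(!\mathcal{U})=\tau(!)\tau(\mathcal{U})$, $\tau(?\mathcal{U})=\tau(?)\tau(\mathcal{U})$, $\tau(\mathcal{P}_1\mid\mathcal{P}_2)=\tau(\mathcal{P}_1)\mid\tau(\mathcal{P}_2)$; it is correct if it preserves and reflects may-convergence and must-convergence of every $\mathrm{SYNCSIMPLE}$-process. *)

From Stdlib Require Import List Permutation Relation_Operators.
From mathcomp Require Import all_boot.
Set Implicit Arguments.
Unset Strict Implicit.
Unset Printing Implicit Defensive.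

Inductive sub_sync : Type :=
| SSucc : sub_sync
| SZero : sub_sync
| SSend : sub_sync -> sub_sync
| SRecv : sub_sync -> sub_sync.

(* A process is a finite parallel composition, represented as a list taken
   up to permutation (| associative and commutative). *)
Definition proc_sync := list sub_sync.

Definition step_sync (p q : proc_sync) : Prop :=
  exists u1 u2 r,
    Permutation p (SSend u1 :: SRecv u2 :: r) /\
    Permutation q (u1 :: u2 :: r).

Definition successful_sync (p : proc_sync) : Prop := List.In SSucc p.

Definition reach_sync := clos_refl_trans proc_sync step_sync.

Definition may_sync (p : proc_sync) : Prop :=
  exists q, reach_sync p q /\ successful_sync q.

Definition must_sync (p : proc_sync) : Prop :=
  forall q, reach_sync p q -> may_sync q.

(* Symbols P_i, T_i for i : 'I_k (0-based index i stands for lock i+1). *)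
Inductive lsym (k : nat) : Type :=
| LP : 'I_k -> lsym k
| LT : 'I_k -> lsym k.

(* A subprocess is a word over the symbols followed by 0 (false) or
   checkmark (true). *)
Definition sub_lock (k : nat) : Type := (seq (lsym k) * bool)%type.
Definition proc_lock (k : nat) : Type := list (sub_lock k).

(* Store: true = full (black square), false = empty (white square). *)
Definition store (k : nat) : Type := {ffun 'I_k -> bool}.

Definition upd (k : nat) (C : store k) (i : 'I_k) (b : bool) : store k :=
  [ffun j => if j == i then b else C j].

Definition state (k : nat) : Type := (proc_lock k * store k)%type.

Inductive step_lock (k : nat) : state k -> state k -> Prop :=
| step_P : forall (i : 'I_k) w e r (p p' : proc_lock k) (C : store k),
    Permutation p ((LP i :: w, e) :: r) ->
    Permutation p' ((w, e) :: r) ->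
    C i = false ->
    step_lock (p, C) (p', upd C i true)
| step_T : forall (i : 'I_k) w e r (p p' : proc_lock k) (C : store k),
    Permutation p ((LT i :: w, e) :: r) ->
    Permutation p' ((w, e) :: r) ->
    step_lock (p, C) (p', upd C i false).

Definition successful_lock (k : nat) (s : state k) : Prop :=
  List.In ([::], true) s.1.

Definition reach_lock (k : nat) := clos_refl_trans (state k) (@step_lock k).

Definition may_lock (k : nat) (s : state k) : Prop :=
  exists s', reach_lock s s' /\ successful_lock s'.

Definition must_lock (k : nat) (s : state k) : Prop :=
  forall s', reach_lock s s' -> may_lock s'.

Fixpoint tr_sub (k : nat) (ts tr : seq (lsym k)) (u : sub_sync) : sub_lock k :=
  match u with
  | SSucc => ([::], true)
  | SZero => ([::], false)
  | SSend u' => let (w, e) := tr_sub ts tr u' in (ts ++ w, e)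
  | SRecv u' => let (w, e) := tr_sub ts tr u' in (tr ++ w, e)
  end.

Definition tr_proc (k : nat) (ts tr : seq (lsym k)) (p : proc_sync) : proc_lock k :=
  map (tr_sub ts tr) p.

(* ts = tau(!), tr = tau(?) *)
Definition correct_translation (k : nat) (IS : store k) (ts tr : seq (lsym k)) : Prop :=
  forall p : proc_sync,
    (may_sync p <-> may_lock (tr_proc ts tr p, IS)) /\
    (must_sync p <-> must_lock (tr_proc ts tr p, IS)).

Definition countP (k : nat) (i : 'I_k) (w : seq (lsym k)) : nat :=
  count (fun s => match s with LP j => j == i | LT _ => false end) w.
Definition countT (k : nat) (i : 'I_k) (w : seq (lsym k)) : nat :=
  count (fun s => match s with LT j => j == i | LP _ => false end) w.

From Stdlib Require Import List Permutation Relation_Operators.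
From mathcomp Require Import all_boot zify.
Set Implicit Arguments.
Unset Strict Implicit.
Unset Printing Implicit Defensive.

(* The SYNCSIMPLE process !✓ | ?0 | !0 | ?0 and its three variants with the ✓
   moved to another component are must-convergent.  Runs of their translations
   differ only in which component carries the ✓, so they can be followed on the
   four words τ(!), τ(?), τ(!), τ(?) alone; must-convergence of the j-th variant
   extends any such run until word j is used up, and a used-up word stays so,
   hence some run consumes all four words.  Along any run a P_i fires only on
   an empty lock i and fills it, while a T_i empties it, so the number of P_i
   fired minus the number of T_i fired is at most 1.  With all four words
   consumed this reads 2 #P_i <= 2 #T_i + 1. *)

Lemma clos_rt_invariant (A : Type) (R : A -> A -> Prop) (P : A -> Prop) x y :
  (forall u v, R u v -> P u -> P v) -> clos_refl_trans A R x y -> P x -> P y.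
Proof. by move=> stepP; elim=> [u v /stepP | // | u v w _ IH1 _ IH2 /IH1/IH2]. Qed.

Lemma Permutation_count (A : Type) (a : pred A) (l l' : list A) :
  Permutation l l' -> count a l = count a l'.
Proof. by elim=> //= [x l1 l2 _ -> | x y l1 | l1 l2 l3 _ -> _ ->] //; rewrite addnCA. Qed.

Lemma Permutation_all (A : Type) (a : pred A) (l l' : list A) :
  Permutation l l' -> all a l = all a l'.
Proof. by elim=> //= [x l1 l2 _ -> | x y l1 | l1 l2 l3 _ -> _ ->] //; rewrite andbCA. Qed.

Lemma has_In (A : Type) (a : pred A) (l : list A) :
  has a l <-> exists2 x, In x l & a x.
Proof.
split=> [/existsb_exists[x []] | [x xl ax]]; first by exists x.
by apply/existsb_exists; exists x.
Qed.

Lemma In_perm_cons2 (A : Type) (x y : A) (l : list A) :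
  In x l -> In y l -> x <> y -> exists r, Permutation l (x :: y :: r).
Proof.
move=> xl yl neq_xy; have [l1 [l2 El]] := In_split _ _ xl; subst l.
have [m1 [m2 E]] : exists m1 m2, l1 ++ l2 = m1 ++ y :: m2.
  apply: In_split; apply: in_or_app.
  by case: (in_app_or _ _ _ yl) => [|[|]]; auto.
exists (m1 ++ m2); apply: Permutation_trans (Permutation_sym (Permutation_middle _ _ _)) _.
apply: perm_skip; rewrite [X in Permutation X _]E.
exact/Permutation_sym/Permutation_middle.
Qed.

Definition terminal (u : sub_sync) : bool :=
  match u with SSucc | SZero => true | _ => false end.
Definition shallow (u : sub_sync) : bool :=
  match u with SSend v | SRecv v => terminal v | _ => true end.
Definition is_send (u : sub_sync) : bool := if u is SSend _ then true else false.
Definition is_recv (u : sub_sync) : bool := if u is SRecv _ then true else false.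
Definition guarded_success (u : sub_sync) : bool :=
  match u with SSend SSucc | SRecv SSucc => true | _ => false end.

Definition balanced_shallow (q : proc_sync) : bool :=
  [&& all shallow q, count is_send q == count is_recv q & has guarded_success q].

Lemma Permutation_balanced_shallow q q' :
  Permutation q q' -> balanced_shallow q = balanced_shallow q'.
Proof.
move=> pq; rewrite /balanced_shallow !has_count (Permutation_all _ pq).
rewrite (Permutation_count is_send pq) (Permutation_count is_recv pq).
by rewrite (Permutation_count guarded_success pq).
Qed.

Definition sync_inv (q : proc_sync) : Prop := In SSucc q \/ balanced_shallow q.

Lemma sync_inv_step q q' : step_sync q q' -> sync_inv q -> sync_inv q'.
Proof.
move=> [u1 [u2 [r [pq pq']]]]; have In_q' u : In u (u1 :: u2 :: r) -> In u q'.
  exact: Permutation_in (Permutation_sym pq').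
case=> [/(Permutation_in _ pq) [//|[//|succ_r]] | ].
  by left; apply: In_q'; right; right.
rewrite /sync_inv (Permutation_balanced_shallow pq) (Permutation_balanced_shallow pq').
clear pq pq'.
case: u1 In_q' => [| |[]|[]] In_q' //; first by left; apply: In_q'; left.
case: u2 In_q' => [| |[]|[]] In_q' //; first by left; apply: In_q'; right; left.
by rewrite /balanced_shallow !has_count /= !add0n !eqSS => ->; right.
Qed.

Lemma sync_inv_reach q q' : reach_sync q q' -> sync_inv q -> sync_inv q'.
Proof. exact: clos_rt_invariant sync_inv_step. Qed.

Lemma sync_inv_may q : sync_inv q -> may_sync q.
Proof.
case=> [succ_q | /and3P[_ /eqP bal /has_In[x qx x_succ]]].
  by exists q; split; [exact: rt_refl|].
have has_q (a : pred sub_sync) : a x -> has a q by move=> ax; apply/has_In; exists x.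
case: x qx x_succ has_q => [| |[]|[]] // qx _ has_q.
- have /has_In[[] // v qv _] : has is_recv q by rewrite has_count -bal -has_count has_q.
  have [|r qr] := In_perm_cons2 qx qv; first by [].
  exists (SSucc :: v :: r); split; last by left.
  by apply: rt_step; exists SSucc, v, r.
- have /has_In[[] // v qv _] : has is_send q by rewrite has_count bal -has_count has_q.
  have [|r qr] := In_perm_cons2 qv qx; first by [].
  exists (v :: SSucc :: r); split; last by right; left.
  by apply: rt_step; exists v, SSucc, r.
Qed.

Lemma sync_inv_must q : sync_inv q -> must_sync q.
Proof. by move=> inv_q q' /sync_inv_reach/(_ inv_q)/sync_inv_may. Qed.

Lemma size_eq_cat_cons (A B : Type) (w1 w2 : seq A) (a : A) (fs : seq B) :
  size fs = size (w1 ++ a :: w2) ->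
  exists f1 e f2, fs = f1 ++ e :: f2 /\ size f1 = size w1.
Proof.
elim: w1 fs => [|a1 w1 IH] [|e fs] //= [sz]; first by exists [::], e, fs.
by have [f1 [e' [f2 [-> <-]]]] := IH _ sz; exists (e :: f1), e', f2.
Qed.

Lemma In_zip_cat_cons (A B : Type) (y : A * B) (ws : seq A) (fs : seq B) :
  In y (zip ws fs) -> exists w1 a w2 f1 e f2,
    [/\ ws = w1 ++ a :: w2, fs = f1 ++ e :: f2, size w1 = size f1 & y = (a, e)].
Proof.
elim: ws fs => [|a ws IH] [|e fs] //= [<- | /IH[w1 [a' [w2 [f1 [e' [f2 [-> -> sz ->]]]]]]]].
  by exists [::], a, ws, [::], e, fs.
by exists (a :: w1), a', w2, (e :: f1), e', f2; rewrite /= sz.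
Qed.

Lemma perm_zip_cat_cons (A B : Type) (w1 w2 : seq A) (a : A) (f1 f2 : seq B) (e : B) :
  size w1 = size f1 ->
  Permutation (zip (w1 ++ a :: w2) (f1 ++ e :: f2)) ((a, e) :: zip w1 f1 ++ zip w2 f2).
Proof. by move=> sz; rewrite zip_cat //=; apply/Permutation_sym/Permutation_middle. Qed.

Section WordRuns.
Variable k : nat.

Definition lock_act (x : lsym k) (C : store k) : option (store k) :=
  match x with
  | LP i => if C i then None else Some (upd C i true)
  | LT i => Some (upd C i false)
  end.

Lemma step_lockP p C p' C' :
  step_lock (p, C) (p', C') <->
  exists x w e r, [/\ Permutation p ((x :: w, e) :: r),
                      Permutation p' ((w, e) :: r) & lock_act x C = Some C'].
Proof.
split=> [st | [[] i [w [e [r [pp pp' /=]]]]]].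
- inversion st as [i' w e r ? ? ? pp pp' Ci | i' w e r ? ? ? pp pp']; subst.
    by exists (LP i'), w, e, r; rewrite /= Ci.
  by exists (LT i'), w, e, r.
- by case: ifP => // Ci [<-]; exact: step_P pp pp' Ci.
- by case=> <-; exact: step_T pp pp'.
Qed.

Lemma countP_cat i (s1 s2 : seq (lsym k)) : countP i (s1 ++ s2) = countP i s1 + countP i s2.
Proof. exact: count_cat. Qed.

Lemma countT_cat i (s1 s2 : seq (lsym k)) : countT i (s1 ++ s2) = countT i s1 + countT i s2.
Proof. exact: count_cat. Qed.

Lemma lock_act_balance i x C C' :
  lock_act x C = Some C' -> countP i [:: x] + C i <= countT i [:: x] + C' i.
Proof.
rewrite /countP /countT; case: x => j /=.
  by case: ifP => // Cj [<-]; rewrite ffunE eq_sym; case: eqP => [->|_]; rewrite ?Cj.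
by case=> <-; rewrite ffunE eq_sym; case: (i == j); case: (C i).
Qed.

(* A configuration keeps, by position, the remaining word of each component
   but not its 0/✓ ending; zipping with the list of endings gives a lock state. *)
Definition config : Type := (seq (seq (lsym k)) * store k)%type.

Inductive wstep : config -> config -> Prop :=
| WStep x w1 w w2 C C' : lock_act x C = Some C' ->
    wstep (w1 ++ (x :: w) :: w2, C) (w1 ++ w :: w2, C').

Definition wreach : config -> config -> Prop := clos_refl_trans config wstep.

Lemma wreach_size s s' : wreach s s' -> size s'.1 = size s.1.
Proof.
move=> reach; apply: (clos_rt_invariant (P := fun t => size t.1 = size s.1) _ reach) => //.
by move=> _ _ [x w1 w w2 C C' _] /=; rewrite !size_cat.
Qed.

Lemma wreach_nil s s' n : wreach s s' -> nth [::] s.1 n = [::] -> nth [::] s'.1 n = [::].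
Proof.
apply: (clos_rt_invariant (P := fun t => nth [::] t.1 n = [::])) => _ _ [x w1 w w2 C C' _] /=.
by rewrite !nth_cat; case: ifP => // _; case: (n - size w1).
Qed.

Lemma wreach_balance i s s' : wreach s s' ->
  countP i (flatten s.1) + countT i (flatten s'.1) + s.2 i <=
  countT i (flatten s.1) + countP i (flatten s'.1) + s'.2 i.
Proof.
elim=> [_ _ [x w1 w w2 C C' /(lock_act_balance i) act] | t | t t' t'' _ IH1 _ IH2];
  [|lia|lia].
rewrite /= !flatten_cat /= !countP_cat !countT_cat -cat1s !countP_cat !countT_cat; lia.
Qed.

Lemma wstep_lift fs s s' : wstep s s' -> size fs = size s.1 ->
  step_lock (zip s.1 fs, s.2) (zip s'.1 fs, s'.2).
Proof.
case=> x w1 w w2 C C' act /= sz_fs.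
have [f1 [e [f2 [-> sz]]]] := size_eq_cat_cons sz_fs.
apply/step_lockP; exists x, w, e, (zip w1 f1 ++ zip w2 f2).
by split=> //; apply: perm_zip_cat_cons.
Qed.

Lemma wreach_lift fs s s' : wreach s s' -> size fs = size s.1 ->
  reach_lock (zip s.1 fs, s.2) (zip s'.1 fs, s'.2).
Proof.
elim=> [x y /wstep_lift st sz | x _ | x y z xy IHxy _ IHyz sz].
- exact/rt_step/st.
- exact: rt_refl.
- by apply: rt_trans (IHxy sz) (IHyz _); rewrite (wreach_size xy).
Qed.

Lemma step_lock_pull fs ws C p p' C' :
  step_lock (p, C) (p', C') -> Permutation p (zip ws fs) ->
  exists2 ws', wstep (ws, C) (ws', C') & Permutation p' (zip ws' fs).
Proof.
case/step_lockP=> x [w [e [r [pp pp' act]]]] pz.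
have /In_zip_cat_cons[w1 [a [w2 [f1 [e' [f2 [Ews Efs sz [Ea Ee]]]]]]]] :
    In (x :: w, e) (zip ws fs).
  by apply: Permutation_in pz _; apply: Permutation_in (Permutation_sym pp) _; left.
subst ws fs a e'.
exists (w1 ++ w :: w2); first exact: WStep.
have rz : Permutation r (zip w1 f1 ++ zip w2 f2).
  apply: (@Permutation_cons_inv _ _ _ (x :: w, e)).
  apply: Permutation_trans (Permutation_sym pp) (Permutation_trans pz _).
  exact: perm_zip_cat_cons.
apply: Permutation_trans pp' (Permutation_trans (perm_skip _ rz) _).
exact/Permutation_sym/perm_zip_cat_cons.
Qed.

Lemma reach_lock_pull fs s s' : reach_lock s s' ->
  forall ws, Permutation s.1 (zip ws fs) ->
  exists2 ws', wreach (ws, s.2) (ws', s'.2) & Permutation s'.1 (zip ws' fs).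
Proof.
elim=> [[p C] [p' C'] /step_lock_pull st | x | x y z _ IHxy _ IHyz] ws pz.
- by have [ws' st' pz'] := st _ _ pz; exists ws'; first exact: rt_step.
- by exists ws; first exact: rt_refl.
- have [ws1 r1 pz1] := IHxy _ pz; have [ws2 r2 pz2] := IHyz _ pz1.
  by exists ws2; first exact: rt_trans r1 r2.
Qed.

Lemma must_lock_drain W fs IS j s :
  must_lock (zip W fs, IS) -> size fs = size W ->
  (forall n, nth false fs n -> n = j) -> wreach (W, IS) s ->
  exists2 s', wreach s s' & nth [::] s'.1 j = [::].
Proof.
case: s => ws C must sz_fs fs_j reach.
have [s'' [reach'' succ]] := must _ (wreach_lift reach sz_fs).
have [ws' reach' perm'] := reach_lock_pull reach'' (Permutation_refl (zip ws fs)).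
have /In_zip_cat_cons[w1 [a [w2 [f1 [e [f2 [Ews Efs sz [Ea Ee]]]]]]]] :=
  Permutation_in _ perm' succ.
exists (ws', s''.2) => //=.
rewrite -(fs_j (size f1)); first by rewrite Ews -sz nth_cat ltnn subnn.
by rewrite Efs nth_cat ltnn subnn.
Qed.

Lemma wreach_drain s0 m :
  (forall j s, j < m -> wreach s0 s -> exists2 s', wreach s s' & nth [::] s'.1 j = [::]) ->
  exists2 s', wreach s0 s' & forall j, j < m -> nth [::] s'.1 j = [::].
Proof.
elim: m => [|m IH] drain; first by exists s0; first exact: rt_refl.
have [s1 reach1 nil1] := IH (fun j s lt_jm => drain j s (ltnW lt_jm)).
have [s2 reach2 nil2] := drain m s1 (ltnSn m) reach1.
exists s2; first exact: rt_trans reach1 reach2.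
move=> j; rewrite ltnS leq_eqVlt => /orP[/eqP -> // | /nil1].
exact: wreach_nil reach2.
Qed.

End WordRuns.

Lemma flatten_nth_nil (A : Type) (ss : seq (seq A)) :
  (forall j, j < size ss -> nth [::] ss j = [::]) -> flatten ss = [::].
Proof.
elim: ss => //= s ss IH nil_ss.
by rewrite [s](nil_ss 0) // IH // => j; apply: (nil_ss j.+1).
Qed.

Definition mark (b : bool) : sub_sync := if b then SSucc else SZero.

Definition probe (j : nat) : proc_sync :=
  [:: SSend (mark (j == 0)); SRecv (mark (j == 1));
      SSend (mark (j == 2)); SRecv (mark (j == 3))].

Lemma probe_must j : j < 4 -> must_sync (probe j).
Proof. by move=> lt_j4; apply: sync_inv_must; right; case: j lt_j4 => [|[|[|[|]]]]. Qed.

Lemma tr_proc_probe k (ts tr : seq (lsym k)) j :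
  tr_proc ts tr (probe j) = zip [:: ts; tr; ts; tr] [:: j == 0; j == 1; j == 2; j == 3].
Proof.
have tr_mark b : tr_sub ts tr (mark b) = ([::], b) by case: b.
by rewrite /tr_proc /= !tr_mark /= !cats0.
Qed.

Theorem proposition4p2 (k : nat) (IS : store k) (ts tr : seq (lsym k)) :
  2 <= k ->
  correct_translation IS ts tr ->
  forall i : 'I_k,
    countP i ts + countP i tr <= countT i ts + countT i tr.
Proof.
move=> _ correct i; set W := [:: ts; tr; ts; tr].
have drain j s : j < 4 -> wreach (W, IS) s ->
    exists2 s', wreach s s' & nth [::] s'.1 j = [::].
  move=> lt_j4; apply: (must_lock_drain (fs := [:: j == 0; j == 1; j == 2; j == 3])) => //.
    by rewrite /W -tr_proc_probe; apply/(correct _).2/probe_must.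
  by case=> [|[|[|[|n]]]] /=; [move/eqP.. | rewrite nth_nil].
have [[ws C] reach drained] := wreach_drain drain.
have nil_ws : flatten ws = [::].
  by apply: flatten_nth_nil => j; rewrite (wreach_size reach); apply: drained.
have := wreach_balance i reach; rewrite /= nil_ws !countP_cat !countT_cat /=.
have := leq_b1 (C i); lia.
Qed.
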